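(* Let $\vec{\mathcal U}_1,\vec{\mathcal U}_2,\vec{\mathcal V}_1,\vec{\mathcal V}_2\in\Upsilon$. If $\preceq_{\vec{\mathcal U}_1}=\preceq_{\vec{\mathcal U}_2}$ and $\preceq_{\vec{\mathcal V}_1}=\preceq_{\vec{\mathcal V}_2}$, then $\preceq_{\vec{\mathcal U}_1*\vec{\mathcal V}_1}=\preceq_{\vec{\mathcal U}_2*\vec{\mathcal V}_2}$.
   Context: $L$ is a propositional language built from a finite set of propositional variables with the connectives $\neg,\wedge,\vee,\rightarrow,\top,\bot$; $W$ is the finite set of propositional worlds. For $\theta\in L$, $S_\theta=\{w\in W\mid w\models\theta\}$. Sequences: finite sequences $\vec{\mathcal U}=(\mathcal U_0,\ldots,\mathcal U_k)$ ($k\ge0$) of mutually disjoint subsets of $W$ (components may be empty, possibly repeatedly). $\mathrm{rank}^{\vec{\mathcal U}}(\theta)$ is the least $i$ with $\mathcal U_i\cap S_\theta\neq\emptyset$, and $\infty$ if none (with $i<\infty$ for every integer $i$). $\theta\mid\!\sim_{\vec{\mathcal U}}\phi$ iff either $\mathrm{rank}^{\vec{\mathcal U}}(\theta)<\mathrm{rank}^{\vec{\mathcal U}}(\theta\wedge\neg\phi)$ or $\mathrm{rank}^{\vec{\mathcal U}}(\theta)=\infty$. $\vec{\mathcal U}$ is full iff $\bigcup_i\mathcal U_i=W$, empty iff $\bigcup_i\mathcal U_i=\emptyset$; $\Upsilon$ is the set of such sequences which are full or empty. For $\vec{\mathcal U}\in\Upsilon$, $\theta\preceq_{\vec{\mathcal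 U}}\phi$ iff (not $\neg\theta\vee\neg\phi\mid\!\sim_{\vec{\mathcal U}}\theta$) or $\neg\phi\mid\!\sim_{\vec{\mathcal U}}\bot$. Sequence revision $*:\Upsilon\times\Upsilon\to\Upsilon$: for $\vec{\mathcal U}=(\mathcal U_0,\ldots,\mathcal U_k)$ and $\vec{\mathcal V}=(\mathcal V_0,\ldots,\mathcal V_m)$, if $\vec{\mathcal U}$ is full then $\vec{\mathcal U}*\vec{\mathcal V}=(\mathcal U_0\cap\mathcal V_0,\ldots,\mathcal U_k\cap\mathcal V_0,\ \mathcal U_0\cap\mathcal V_1,\ldots,\mathcal U_k\cap\mathcal V_1,\ \ldots,\ \mathcal U_0\cap\mathcal V_m,\ldots,\mathcal U_k\cap\mathcal V_m)$; otherwise $\vec{\mathcal U}*\vec{\mathcal V}=\vec{\mathcal V}$. *)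

From mathcomp Require Import all_boot.
Set Implicit Arguments. Unset Strict Implicit. Unset Printing Implicit Defensive.

Inductive form (P : Type) : Type :=
| FVar of P
| FNeg of form P
| FAnd of form P & form P
| FOr of form P & form P
| FImp of form P & form P
| FTop
| FBot.
Arguments FTop {P}. Arguments FBot {P}.

Definition world (P : finType) := {ffun P -> bool}.

Fixpoint sat (P : finType) (w : world P) (f : form P) : bool :=
  match f with
  | FVar p => w p
  | FNeg g => ~~ sat w g
  | FAnd g h => sat w g && sat w h
  | FOr g h => sat w g || sat w h
  | FImp g h => sat w g ==> sat w h
  | FTop => true
  | FBot => false
  end.

Definition models (P : finType) (f : form P) : {set world P} := [set w | sat w f].

Definition is_sequence (P : finType) (U : seq {set world P}) : bool :=
  (0 < size U) && pairwise (fun A B : {set world P} => [disjoint A & B]) U.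

Definition full (P : finType) (U : seq {set world P}) : bool :=
  \bigcup_(A <- U) A == [set: world P].
Definition emptyseq (P : finType) (U : seq {set world P}) : bool :=
  \bigcup_(A <- U) A == set0.

Definition in_Upsilon (P : finType) (U : seq {set world P}) : bool :=
  is_sequence U && (full U || emptyseq U).

(* rank: None stands for infinity *)
Definition rank (P : finType) (U : seq {set world P}) (f : form P) : option nat :=
  let i := find (fun A => A :&: models f != set0) U in
  if i < size U then Some i else None.

Definition rank_lt (a b : option nat) : bool :=
  match a, b with
  | Some i, Some j => i < j
  | Some _, None => true
  | None, _ => false
  end.

Definition entails (P : finType) (U : seq {set world P}) (t f : form P) : bool :=
  rank_lt (rank U t) (rank U (FAnd t (FNeg f))) || (rank U t == None).

Definition pref (P : finType) (U : seq {set world P}) (t f : form P) : bool :=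
  ~~ entails U (FOr (FNeg t) (FNeg f)) t || entails U (FNeg f) FBot.

Definition revise (P : finType) (U V : seq {set world P}) : seq {set world P} :=
  if full U then flatten [seq [seq A :&: B | A <- U] | B <- V] else V.

From mathcomp Require Import all_boot zify.

Set Implicit Arguments.
Unset Strict Implicit.
Unset Printing Implicit Defensive.

(* A sequence U orders the worlds it covers by the index of the component
   containing them, and the rank of a formula is the least index of its
   models; hence |~_U and <=_U only depend on this strict order and on the
   set of covered worlds.  Conversely, comparing the negated characteristic
   formulas of two worlds recovers the order, and T <=_U F tells whether a
   sequence of Upsilon is empty.  When U is full, U * V orders the worlds
   lexicographically, first by V and then by U, so its order and covered set
   only depend on those of U and V. *)

Section Levels.
Variable P : finType.
Implicit Types (U V : seq {set world P}) (S T : {set world P}) (a b : form P)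
  (v w : world P).

(* [size U] stands for rank infinity in both levels. *)
Definition level U w : nat := find (fun A : {set world P} => w \in A) U.
Definition set_level U S : nat := find (fun A : {set world P} => A :&: S != set0) U.

Definition covered U w : bool := level U w < size U.
Definition level_lt U w w' : bool := level U w < level U w'.

Lemma level_le_size U w : level U w <= size U.
Proof. exact: find_size. Qed.

Lemma set_level_le_size U S : set_level U S <= size U.
Proof. exact: find_size. Qed.

Lemma set_level_le_level U S w : w \in S -> set_level U S <= level U w.
Proof.
move=> wS; rewrite /set_level /level; elim: U => //= A U IH.
case: ifPn => // /negPn AS0; rewrite ifN //.
by apply: contraTN AS0 => wA; apply/set0Pn; exists w; rewrite inE wA.
Qed.

Lemma set_level_attained U S :
  set_level U S < size U -> exists2 w, w \in S & level U w = set_level U S.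
Proof.
rewrite /set_level /level; elim: U => //= A U IH.
case: ifPn => [/set0Pn [w] | AS0].
  by rewrite inE => /andP [wA wS] _; exists w; rewrite ?wA.
rewrite ltnS => /IH [w wS <-]; exists w; rewrite // ifN //.
by apply: contraNN AS0 => wA; apply/set0Pn; exists w; rewrite inE wA.
Qed.

Lemma set_level1 U w : set_level U [set w] = level U w.
Proof.
by apply: eq_find => A; rewrite setI_eq0 disjoint_sym disjoints1 negbK.
Qed.

Lemma set_levelU U S T :
  set_level U (S :|: T) = minn (set_level U S) (set_level U T).
Proof.
rewrite /set_level; elim: U => //= A U ->.
rewrite setIUr setU_eq0 negb_and.
by case: (A :&: S != set0); case: (A :&: T != set0) => /=; lia.
Qed.

Lemma set_level0 U : set_level U set0 = size U.
Proof. by rewrite /set_level; elim: U => //= A U ->; rewrite setI0 eqxx. Qed.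

Lemma rank_ltE U a b :
  rank_lt (rank U a) (rank U b) = (set_level U (models a) < set_level U (models b)).
Proof.
rewrite /rank /= -!/(set_level U _).
move: (set_level_le_size U (models a)) (set_level_le_size U (models b)).
by case: ifP; case: ifP => /=; lia.
Qed.

Lemma rank_eqNone U a : (rank U a == None) = (size U <= set_level U (models a)).
Proof.
by rewrite /rank /= -!/(set_level U _); case: ltnP.
Qed.

Lemma set_level_ltE U S T :
  (set_level U S < set_level U T) =
  [exists w in S, covered U w && [forall w' in T, level_lt U w w']].
Proof.
apply/idP/exists_inP => [ST | [w wS /andP [cov_w /forall_inP below]]].
  have [w wS lw] := set_level_attained (leq_trans ST (set_level_le_size U T)).
  exists w => //; rewrite /covered lw (leq_trans ST (set_level_le_size U T)).
  by apply/forall_inP => w' w'T; rewrite /level_lt lw (leq_trans ST)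
    ?set_level_le_level.
have := set_level_le_level U wS.
case: (ltnP (set_level U T) (size U)) => [/set_level_attained [w' w'T <-] | TU].
  by move: (below w' w'T); rewrite /level_lt; lia.
by move: cov_w; rewrite /covered; lia.
Qed.

Lemma set_level_uncoveredE U S :
  (size U <= set_level U S) = [forall w in S, ~~ covered U w].
Proof.
apply/idP/forall_inP => [SU w wS | uncov].
  by rewrite /covered -leqNgt (leq_trans SU) ?set_level_le_level.
rewrite leqNgt; apply/negP => SU; have [w wS lw] := set_level_attained SU.
by move: (uncov w wS); rewrite /covered lw SU.
Qed.

Lemma pref_congr U U' :
  covered U =1 covered U' -> level_lt U =2 level_lt U' -> pref U =2 pref U'.
Proof.
move=> cov_eq lt_eq.
have entails_eq a b : entails U a b = entails U' a b.
  rewrite /entails !rank_ltE !rank_eqNone !set_level_ltE !set_level_uncoveredE.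
  congr (_ || _); last by apply: eq_forallb => w; rewrite cov_eq.
  apply: eq_existsb => w; rewrite cov_eq; congr (_ && (_ && _)).
  by apply: eq_forallb => w'; rewrite lt_eq.
by move=> t f; rewrite /pref !entails_eq.
Qed.

Lemma models_neg a : models (FNeg a) = ~: models a.
Proof. by apply/setP => v; rewrite !inE. Qed.

Lemma models_and a b : models (FAnd a b) = models a :&: models b.
Proof. by apply/setP => v; rewrite !inE. Qed.

Lemma models_or a b : models (FOr a b) = models a :|: models b.
Proof. by apply/setP => v; rewrite !inE. Qed.

Lemma models_top : models (FTop : form P) = setT.
Proof. by apply/setP => v; rewrite !inE. Qed.

Lemma models_bot : models (FBot : form P) = set0.
Proof. by apply/setP => v; rewrite !inE. Qed.

Definition char_form w : form P :=
  foldr (fun p acc => FAnd (if w p then FVar p else FNeg (FVar p)) acc) FTop (enum P).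

Lemma models_char_form w : models (char_form w) = [set w].
Proof.
apply/setP => v; rewrite !inE.
have -> : sat v (char_form w) = all (fun p => v p == w p) (enum P).
  by rewrite /char_form; elim: (enum P) => //= p s ->; case: (w p) => /=; case: (v p).
apply/allP/eqP => [v_w | -> //].
by apply/ffunP => p; apply/eqP/v_w; rewrite mem_enum.
Qed.

Lemma level_lt_pref U w w' :
  level_lt U w w' = ~~ pref U (FNeg (char_form w')) (FNeg (char_form w)).
Proof.
rewrite /pref /entails !rank_ltE !rank_eqNone.
rewrite !(models_and, models_or, models_neg, models_char_form, models_bot) !setCK.
rewrite setUK setC0 setIT !set_levelU !set_level1 /level_lt.
by move: (level_le_size U w) (level_le_size U w'); lia.
Qed.

Lemma pref_top_bot U : pref U FTop FBot = (size U <= set_level U setT).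
Proof.
rewrite /pref /entails !rank_ltE !rank_eqNone.
rewrite !(models_and, models_or, models_neg, models_top, models_bot).
rewrite setCT setC0 set0U setIid setI0 set_level0.
by move: (set_level_le_size U setT); lia.
Qed.

Lemma coveredE U w : covered U w = (w \in \bigcup_(A <- U) A).
Proof.
rewrite /covered /level -has_find.
by elim: U => [|A U IH]; rewrite ?big_nil ?big_cons inE //= IH.
Qed.

Lemma covered_full U w : full U -> covered U w.
Proof. by move=> /eqP fullU; rewrite coveredE fullU inE. Qed.

Lemma covered_Upsilon U w : in_Upsilon U -> covered U w = full U.
Proof.
case/andP => _ /orP [fullU | /eqP emptyU]; first by rewrite fullU covered_full.
rewrite coveredE /full emptyU inE; apply/esym/eqP => set0T.
by have := in_setT w; rewrite -set0T inE.
Qed.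

Lemma full_pref U : in_Upsilon U -> full U = ~~ pref U FTop FBot.
Proof.
move=> UU; rewrite pref_top_bot set_level_uncoveredE.
have w0 : world P := [ffun=> true].
case: (boolP (full U)) => fullU.
  apply/esym/negP => /forall_inP /(_ w0 (in_setT w0)).
  by rewrite covered_Upsilon // fullU.
apply/esym/negbF/forall_inP => w _.
by rewrite covered_Upsilon // (negbTE fullU).
Qed.

Lemma size_revise U V : full U -> size (revise U V) = size V * size U.
Proof.
move=> fullU; rewrite /revise fullU.
by elim: V => //= B V IH; rewrite size_cat size_map IH.
Qed.

Lemma level_revise U V w : full U ->
  level (revise U V) w = level V w * size U + (if covered V w then level U w else 0).
Proof.
move=> fullU; have := covered_full w fullU.
rewrite /revise fullU /covered /level -has_find => wU.
elim: V => [|B V IH] //=; rewrite find_cat has_map size_map.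
case: (boolP (w \in B)) => wB.
  have wAB : preim (fun A => A :&: B) (fun A => w \in A) =1 (fun A => w \in A).
    by move=> A; rewrite /= inE wB andbT.
  by rewrite (eq_has wAB) wU find_map (eq_find wAB).
have wAB : preim (fun A => A :&: B) (fun A => w \in A) =1 pred0.
  by move=> A; rewrite /= inE (negbTE wB) andbF.
by rewrite (eq_has wAB) has_pred0 IH ltnS mulSn addnA.
Qed.

Lemma covered_revise U V w : full U -> covered (revise U V) w = covered V w.
Proof.
move=> fullU; have := covered_full w fullU.
rewrite /covered level_revise // size_revise //.
by move: (level_le_size V w); case: ifP; nia.
Qed.

Lemma ltn_lex n i i' j j' : i < n -> i' < n ->
  (j * n + i < j' * n + i') = (j < j') || (j == j') && (i < i').
Proof. by move=> lt_i_n lt_i'_n; case: ltngtP; nia. Qed.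

Lemma level_lt_revise U V w w' : full U ->
  level_lt (revise U V) w w' =
  level_lt V w w' || [&& covered V w, ~~ level_lt V w' w & level_lt U w w'].
Proof.
move=> fullU.
have offset_lt v : (if covered V v then level U v else 0) < size U.
  case: ifP => _; first exact: covered_full.
  exact: leq_ltn_trans (leq0n _) (covered_full v fullU).
rewrite /level_lt !level_revise // ltn_lex // /covered.
move: (level_le_size V w) (level_le_size V w').
by case: ifP; case: ifP; lia.
Qed.

End Levels.

Theorem proposition5 (P : finType) (U1 U2 V1 V2 : seq {set world P}) :
  in_Upsilon U1 -> in_Upsilon U2 -> in_Upsilon V1 -> in_Upsilon V2 ->
  (forall t f : form P, pref U1 t f = pref U2 t f) ->
  (forall t f : form P, pref V1 t f = pref V2 t f) ->
  forall t f : form P, pref (revise U1 V1) t f = pref (revise U2 V2) t f.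
Proof.
move=> UU1 UU2 UV1 UV2 prefU prefV.
have fullU : full U1 = full U2 by rewrite !full_pref // prefU.
have fullV : full V1 = full V2 by rewrite !full_pref // prefV.
case: (boolP (full U1)) => fullU1; last first.
  by rewrite /revise (negbTE fullU1) -fullU (negbTE fullU1).
have fullU2 : full U2 by rewrite -fullU.
have ltU w w' : level_lt U1 w w' = level_lt U2 w w' by rewrite !level_lt_pref prefU.
have ltV w w' : level_lt V1 w w' = level_lt V2 w w' by rewrite !level_lt_pref prefV.
have covV w : covered V1 w = covered V2 w by rewrite !covered_Upsilon // fullV.
apply: pref_congr => [w | w w'].
  by rewrite !covered_revise.
by rewrite !level_lt_revise // !ltU !ltV covV.
Qed.
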